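(* Let $\mathcal{M}_1$, $\mathcal{M}_2$ and $f$ be real-valued random variables with finite, strictly positive variances, and assume $\mathrm{Cov}[\mathcal{M}_1,f]\neq 0$ and $\mathrm{Cov}[\mathcal{M}_2,f]\neq 0$. Suppose $$\mathrm{Cov}[\mathcal{M}_1,\mathcal{M}_2]\neq \frac{\mathrm{Cov}[\mathcal{M}_2,f]\,\mathrm{Var}[\mathcal{M}_1]}{\mathrm{Cov}[\mathcal{M}_1,f]}\quad\text{and}\quad \mathrm{Cov}[\mathcal{M}_1,\mathcal{M}_2]\neq \frac{\mathrm{Cov}[\mathcal{M}_1,f]\,\mathrm{Var}[\mathcal{M}_2]}{\mathrm{Cov}[\mathcal{M}_2,f]}.$$ Then there exist $w_1,w_2\in\mathbb{R}$ such that $$\rho_{\mathrm{Pearson}}(w_1\mathcal{M}_1+w_2\mathcal{M}_2,\,f)>\max\big(\rho_{\mathrm{Pearson}}(\mathcal{M}_1,f),\,\rho_{\mathrm{Pearson}}(\mathcal{M}_2,f)\big).$$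
   Context: $\mathrm{Cov}[X,Y]$ and $\mathrm{Var}[X]$ denote covariance and variance, and $\rho_{\mathrm{Pearson}}(X,Y)=\mathrm{Cov}[X,Y]/\sqrt{\mathrm{Var}[X]\mathrm{Var}[Y]}$ is Pearson's correlation coefficient (defined whenever both variances are positive). In the paper's setting $\mathcal{M}_1,\mathcal{M}_2$ are two estimation metrics and $f$ the objective evaluation metric, viewed as functions on a finite set of neural architectures (i.e., random variables under the uniform distribution on that set). *)

From HB Require Import structures.
From mathcomp Require Import all_boot all_order all_algebra.
From mathcomp Require Import all_classical all_reals all_analysis.
Set Implicit Arguments. Unset Strict Implicit. Unset Printing Implicit Defensive.
Import Order.TTheory GRing.Theory Num.Theory.
Local Open Scope ring_scope.

(* It is only meaningful when both variances are finite and positive;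
   the theorem always assumes / asserts this explicitly. *)
Definition pearson d (T : measurableType d) (R : realType)
  (P : probability T R) (X Y : T -> R) : R :=
  fine (covariance P X Y) / Num.sqrt (fine (variance P X) * fine (variance P Y)).

From HB Require Import structures.
From mathcomp Require Import all_boot all_order all_algebra.
From mathcomp Require Import all_classical all_reals all_analysis.
From mathcomp Require Import ring.
Import Order.TTheory GRing.Theory Num.Theory.
Local Open Scope ring_scope.

(* Write Vi = Var[Mi], C = Cov[M1,M2], ci = Cov[Mi,f] and D = V1 V2 - C^2.
   Take the least-squares weights scaled by D: w1 = V2 c1 - C c2 and
   w2 = V1 c2 - C c1.  Then X = w1 M1 + w2 M2 has Cov[X,f] = q := w1 c1 + w2 c2
   and Var[X] = D q, while V1 q = w2^2 + c1^2 D.  Hence, as soon as w2 <> 0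
   (the first non-degeneracy hypothesis), rho(X,f)^2 = q / (D Var[f]) is larger
   than c1^2 / (V1 Var[f]) = rho(M1,f)^2; symmetrically for M2.  Finally D > 0
   by Cauchy-Schwarz, since V1 M2 - C M1 has variance V1 D and covariance
   w2 <> 0 with f. *)

Section covariance_L2.
Context {d} {T : measurableType d} {R : realType} (P : probability T R).

Lemma Lfun2_lincomb (a b : R) {X Y : T -> R} : X \in Lfun P 2%:E -> Y \in Lfun P 2%:E ->
  (a \o* X \+ b \o* Y)%R \in Lfun P 2%:E.
Proof.
have le12 : (1 <= 2 :> R) by rewrite ler1n.
by move=> X2 Y2; rewrite rpredD ?Lfun_scale ?lee1n.
Qed.

Lemma covariance_fineK {X Y : T -> R} : X \in Lfun P 2%:E -> Y \in Lfun P 2%:E ->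
  (fine (covariance P X Y))%:E = covariance P X Y.
Proof.
have Pfin : (P setT \is a fin_num)%E := fin_num_measure P _ measurableT.
move=> X2 Y2; rewrite fineK //; apply: covariance_fin_num.
- exact: Lfun_subset12.
- exact: Lfun_subset12.
- exact: Lfun2_mul_Lfun1.
Qed.

Lemma fine_covariance_lincombl (a b : R) {X Y Z : T -> R} :
  X \in Lfun P 2%:E -> Y \in Lfun P 2%:E -> Z \in Lfun P 2%:E ->
  fine (covariance P (a \o* X \+ b \o* Y)%R Z) =
    a * fine (covariance P X Z) + b * fine (covariance P Y Z).
Proof.
have Pfin : (P setT \is a fin_num)%E := fin_num_measure P _ measurableT.
have le12 : (1 <= 2 :> R) by rewrite ler1n.
move=> X2 Y2 Z2.
have X1 := Lfun_subset12 Pfin X2; have Y1 := Lfun_subset12 Pfin Y2.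
have Z1 := Lfun_subset12 Pfin Z2.
rewrite covarianceDl ?Lfun_scale // !covarianceZl ?Lfun2_mul_Lfun1 //.
by rewrite -(covariance_fineK X2 Z2) -(covariance_fineK Y2 Z2) -!EFinM -EFinD.
Qed.

Lemma fine_variance_lincomb (a b : R) {X Y : T -> R} : X \in Lfun P 2%:E -> Y \in Lfun P 2%:E ->
  fine (variance P (a \o* X \+ b \o* Y)%R) =
    a ^+ 2 * fine (variance P X) + 2 * a * b * fine (covariance P X Y)
    + b ^+ 2 * fine (variance P Y).
Proof.
move=> X2 Y2; have XY2 := Lfun2_lincomb a b X2 Y2.
rewrite /variance fine_covariance_lincombl // !(covarianceC P _ (a \o* X \+ b \o* Y)%R).
by rewrite !fine_covariance_lincombl // (covarianceC P Y X); ring.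
Qed.

Lemma fine_covariance_sqr_le {X Y : T -> R} : X \in Lfun P 2%:E -> Y \in Lfun P 2%:E ->
  fine (covariance P X Y) ^+ 2 <= fine (variance P X) * fine (variance P Y).
Proof.
have Pfin : (P setT \is a fin_num)%E := fin_num_measure P _ measurableT.
move=> X2 Y2.
have VX_ge0 : 0 <= fine (variance P X) := fine_ge0 (variance_ge0 P X).
have VY_ge0 : 0 <= fine (variance P Y) := fine_ge0 (variance_ge0 P Y).
have cov_le U : U \in Lfun P 2%:E ->
    fine (covariance P X U) <= Num.sqrt (fine (variance P X) * fine (variance P U)).
  move=> U2; have := covariance_le X2 U2.
  rewrite -(covariance_fineK X2 U2) -(fineK (variance_fin_num X2)).
  by rewrite -(fineK (variance_fin_num U2)) /= -EFinM lee_fin sqrtrM.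
have NY2 : (\- Y)%R \in Lfun P 2%:E by rewrite rpredN.
have cov_N : fine (covariance P X (\- Y)%R) = - fine (covariance P X Y).
  have XY1 := Lfun2_mul_Lfun1 X2 Y2.
  by rewrite covarianceNr ?fineN // Lfun_subset12.
have abs_le : `|fine (covariance P X Y)| <=
    Num.sqrt (fine (variance P X) * fine (variance P Y)).
  rewrite ler_norml cov_le // andbT lerNl -cov_N.
  by rewrite -(varianceN Y2) cov_le.
rewrite -real_normK ?num_real // -(sqr_sqrtr (mulr_ge0 VX_ge0 VY_ge0)).
by rewrite lerXn2r ?nnegrE ?sqrtr_ge0.
Qed.

Lemma gram_det_gt0 {X Y Z : T -> R} :
  X \in Lfun P 2%:E -> Y \in Lfun P 2%:E -> Z \in Lfun P 2%:E ->
  0 < fine (variance P X) ->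
  fine (variance P X) * fine (covariance P Y Z)
    - fine (covariance P X Y) * fine (covariance P X Z) != 0 ->
  0 < fine (variance P X) * fine (variance P Y) - fine (covariance P X Y) ^+ 2.
Proof.
move=> X2 Y2 Z2 VX_gt0 e_neq0.
pose U := ((- fine (covariance P X Y)) \o* X \+ fine (variance P X) \o* Y)%R.
have U2 : U \in Lfun P 2%:E by apply: Lfun2_lincomb.
have covUZ : fine (covariance P U Z) = fine (variance P X) * fine (covariance P Y Z)
    - fine (covariance P X Y) * fine (covariance P X Z).
  by rewrite fine_covariance_lincombl //; ring.
have varU : fine (variance P U) = fine (variance P X) *
    (fine (variance P X) * fine (variance P Y) - fine (covariance P X Y) ^+ 2).
  by rewrite fine_variance_lincomb //; ring.
have VZ_ge0 : 0 <= fine (variance P Z) := fine_ge0 (variance_ge0 P Z).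
have e2_gt0 : 0 < fine (covariance P U Z) ^+ 2 by rewrite exprn_even_gt0 //= covUZ.
have := fine_covariance_sqr_le U2 Z2; rewrite varU.
move=> /(lt_le_trans e2_gt0); rewrite -mulrA pmulr_rgt0 //.
by apply: contraTT; rewrite -!leNgt => D_le0; rewrite mulr_le0_ge0.
Qed.

End covariance_L2.

Lemma ltr_div_sqrt (R : rcfType) (a b x y : R) : 0 < x -> 0 < y -> 0 < b ->
  a ^+ 2 * y < b ^+ 2 * x -> a / Num.sqrt x < b / Num.sqrt y.
Proof.
move=> x_gt0 y_gt0 b_gt0 lt_sqr.
have rhs_gt0 : 0 < b / Num.sqrt y by rewrite divr_gt0 ?sqrtr_gt0.
have [a_le0 | a_gt0] := lerP a 0.
  by apply: le_lt_trans rhs_gt0; rewrite pmulr_lle0 // invr_gt0 sqrtr_gt0.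
have sqrt_div c z : 0 <= c -> 0 < z -> c / Num.sqrt z = Num.sqrt (c ^+ 2 / z).
  move=> c_ge0 z_gt0; rewrite sqrtrM ?sqr_ge0 // sqrtr_sqr ger0_norm //.
  by rewrite sqrtrV // ltW.
rewrite !sqrt_div ?ltW // ltr_sqrt; last by rewrite divr_gt0 // exprn_gt0.
by rewrite ltr_pdivrMr // mulrAC ltr_pdivlMr.
Qed.

Section sqr_decomposition.
Context {R : rcfType} {V Vf D c q w : R}.
Hypotheses (V_gt0 : 0 < V) (D_gt0 : 0 < D) (w_neq0 : w != 0).
Hypothesis decomp : V * q = w ^+ 2 + c ^+ 2 * D.

Lemma sqr_decomp_lt : c ^+ 2 * D < V * q.
Proof. by rewrite decomp ltrDr exprn_even_gt0. Qed.

Lemma sqr_decomp_gt0 : 0 < q.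
Proof.
have cD_ge0 : 0 <= c ^+ 2 * D by rewrite mulr_ge0 ?sqr_ge0 ?ltW.
by rewrite -(pmulr_rgt0 _ V_gt0) (le_lt_trans cD_ge0 sqr_decomp_lt).
Qed.

Lemma sqr_decomp_corr_lt : 0 < Vf ->
  c / Num.sqrt (V * Vf) < q / Num.sqrt (D * q * Vf).
Proof.
move=> Vf_gt0; have q_gt0 := sqr_decomp_gt0.
apply: ltr_div_sqrt; rewrite ?mulr_gt0 //.
have -> : c ^+ 2 * (D * q * Vf) = c ^+ 2 * D * (q * Vf) by ring.
have -> : q ^+ 2 * (V * Vf) = V * q * (q * Vf) by ring.
by rewrite ltr_pM2r ?mulr_gt0 // sqr_decomp_lt.
Qed.

End sqr_decomposition.

Lemma subr_neq0_of_neq_div {F : fieldType} {x a b c : F} :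
  c != 0 -> x != a * b / c -> b * a - x * c != 0.
Proof.
by move=> c_neq0; apply: contra; rewrite subr_eq0 => /eqP E; rewrite [a * b]mulrC E mulfK.
Qed.

Theorem proposition1 (d : measure_display) (T : measurableType d) (R : realType)
  (P : probability T R) (M1 M2 f : T -> R) :
  M1 \in Lfun P 2%:E -> M2 \in Lfun P 2%:E -> f \in Lfun P 2%:E ->
  (0 < variance P M1)%E -> (0 < variance P M2)%E -> (0 < variance P f)%E ->
  fine (covariance P M1 f) != 0 -> fine (covariance P M2 f) != 0 ->
  fine (covariance P M1 M2) !=
    fine (covariance P M2 f) * fine (variance P M1) / fine (covariance P M1 f) ->
  fine (covariance P M1 M2) !=
    fine (covariance P M1 f) * fine (variance P M2) / fine (covariance P M2 f) ->
  exists w1 w2 : R,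
    (0 < variance P (w1 \o* M1 \+ w2 \o* M2)%R)%E /\
    pearson P (w1 \o* M1 \+ w2 \o* M2)%R f >
      Num.max (pearson P M1 f) (pearson P M2 f).
Proof.
move=> M1_2 M2_2 f_2 V1_gt0 V2_gt0 Vf_gt0 c1_neq0 c2_neq0 neq1 neq2.
have fine_gt0 X : X \in Lfun P 2%:E -> (0 < variance P X)%E -> 0 < fine (variance P X).
  by move=> X2; rewrite -lte_fin fineK ?variance_fin_num.
move: V1_gt0 V2_gt0 Vf_gt0.
move=> /(fine_gt0 _ M1_2) V1_gt0 /(fine_gt0 _ M2_2) V2_gt0 /(fine_gt0 _ f_2) Vf_gt0.
pose V1 := fine (variance P M1); pose V2 := fine (variance P M2).
pose C := fine (covariance P M1 M2).
pose c1 := fine (covariance P M1 f); pose c2 := fine (covariance P M2 f).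
pose w1 := V2 * c1 - C * c2; pose w2 := V1 * c2 - C * c1.
pose D := V1 * V2 - C ^+ 2; pose q := w1 * c1 + w2 * c2.
have w1_neq0 : w1 != 0 := subr_neq0_of_neq_div c2_neq0 neq2.
have w2_neq0 : w2 != 0 := subr_neq0_of_neq_div c1_neq0 neq1.
have D_gt0 : 0 < D := gram_det_gt0 P M1_2 M2_2 f_2 V1_gt0 w2_neq0.
have decomp1 : V1 * q = w2 ^+ 2 + c1 ^+ 2 * D by rewrite /q /w1 /w2 /D; ring.
have decomp2 : V2 * q = w1 ^+ 2 + c2 ^+ 2 * D by rewrite /q /w1 /w2 /D; ring.
have covXf : fine (covariance P (w1 \o* M1 \+ w2 \o* M2)%R f) = q.
  by rewrite fine_covariance_lincombl.
have varX : fine (variance P (w1 \o* M1 \+ w2 \o* M2)%R) = D * q.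
  by rewrite fine_variance_lincomb // /q /w1 /w2 /D /V1 /V2 /C /c1 /c2; ring.
exists w1, w2; split.
  have X2 := Lfun2_lincomb P w1 w2 M1_2 M2_2.
  rewrite -(fineK (variance_fin_num X2)) varX lte_fin mulr_gt0 //.
  exact: sqr_decomp_gt0 V1_gt0 D_gt0 w2_neq0 decomp1.
rewrite /pearson covXf varX gt_max; apply/andP; split.
- exact: sqr_decomp_corr_lt V1_gt0 D_gt0 w2_neq0 decomp1 Vf_gt0.
- exact: sqr_decomp_corr_lt V2_gt0 D_gt0 w1_neq0 decomp2 Vf_gt0.
Qed.
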